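(* Let $\mathfrak{u}_s(1,1)=\{T\in M_2(\mathbb{C}): T=T^*,\ T^*I_{1,1}+I_{1,1}T=0\}$ and let $\mathbf{U}_{s+}(1,1)=\{M\in\mathbf{U}_s(1,1):\operatorname{Tr}(M)\geq 2\}$. Then $\exp(\mathfrak{u}_s(1,1))=\mathbf{U}_{s+}(1,1)$, where $\exp$ is the matrix exponential. Moreover, every element of $\exp(\mathfrak{u}_s(1,1))$ is equivalent (under $\sim$) to exactly one element of $G_+=\{M_t:t\geq 0\}$, where $M_t=\begin{pmatrix}\cosh t&\sinh t\\ \sinh t&\cosh t\end{pmatrix}$; i.e. $\exp(\mathfrak{u}_s(1,1))/\!\sim\;=G_+$.
   Context: $I_{1,1}=\mathrm{diag}\{1,-1\}$; $T^*$ is the conjugate transpose. $\mathbf{U}_s(1,1)=\{M\in\mathbf{GL}(2,\mathbb{C}): M=M^*,\ M^*I_{1,1}M=I_{1,1}\}$. The equivalence $\sim$ on $2\times 2$ matrices in $\mathbf{U}(1,1)=\{M: M^*I_{1,1}M=I_{1,1}\}$ is the one defined by: $M_1\sim M_2$ if $M_1=\pm M_2$ or $M_1=Q^*M_2Q$ for some $Q\in\mathbf{U}(1)\oplus\mathbf{U}(1)$ (diagonal matrices with unimodular diagonal entries), taken as the equivalence relation these relations generate. *)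

From HB Require Import structures.
From mathcomp Require Import all_boot all_order all_algebra.
From mathcomp Require Import all_classical all_reals all_analysis.
From mathcomp Require Import complex.
From Stdlib Require Import Relation_Operators.
Set Implicit Arguments. Unset Strict Implicit. Unset Printing Implicit Defensive.
Import Order.TTheory GRing.Theory Num.Theory.
Import numFieldNormedType.Exports.
Local Open Scope classical_set_scope.
Local Open Scope ring_scope.

Section Defs.
Variable R : realType.
Local Notation C := R[i].

Definition mxstar (M : 'M[C]_2) : 'M[C]_2 := \matrix_(i, j) conjc (M j i).

Definition I11 : 'M[C]_2 :=
  \matrix_(i, j) (if i == j then (if i == 0 then 1 else -1) else 0).

Definition inU11 (M : 'M[C]_2) : Prop := mxstar M *m I11 *m M = I11.

Definition inUs11 (M : 'M[C]_2) : Prop :=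
  M \in unitmx /\ M = mxstar M /\ mxstar M *m I11 *m M = I11.

Definition inUsplus (M : 'M[C]_2) : Prop := inUs11 M /\ 2 <= \tr M.

Definition in_us11 (T : 'M[C]_2) : Prop :=
  T = mxstar T /\ mxstar T *m I11 + I11 *m T = 0.

Definition inU1U1 (Q : 'M[C]_2) : Prop :=
  (forall i j : 'I_2, i != j -> Q i j = 0) /\ (forall i : 'I_2, `|Q i i| = 1).

Definition sim0 (M1 M2 : 'M[C]_2) : Prop :=
  M1 = M2 \/ M1 = - M2 \/ exists Q, inU1U1 Q /\ M1 = mxstar Q *m M2 *m Q.

Definition sim (M1 M2 : 'M[C]_2) : Prop := clos_refl_sym_trans _ sim0 M1 M2.

Definition expm_partial (T : 'M[C]_2) (N : nat) : 'M[C]_2 :=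
  \sum_(k < N) (k`!%:R)^-1 *: T ^+ k.

Definition is_expm (T E : 'M[C]_2) : Prop :=
  forall i j : 'I_2,
    (fun N => complex.Re (expm_partial T N i j)) @ \oo --> complex.Re (E i j) /\
    (fun N => complex.Im (expm_partial T N i j)) @ \oo --> complex.Im (E i j).

Definition in_exp_us11 (M : 'M[C]_2) : Prop :=
  exists T, in_us11 T /\ is_expm T M.

Definition coshR (t : R) : R := (expR t + expR (- t)) / 2.
Definition sinhR (t : R) : R := (expR t - expR (- t)) / 2.

Definition Mt (t : R) : 'M[C]_2 :=
  \matrix_(i, j) (if i == j then (coshR t)%:C%C else (sinhR t)%:C%C).

End Defs.

From mathcomp Require Import all_boot all_order all_algebra.
From mathcomp Require Import all_classical all_reals all_analysis.
From mathcomp Require Import complex.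
From mathcomp Require Import ring lra.
From Stdlib Require Import Relation_Operators.
Set Implicit Arguments. Unset Strict Implicit. Unset Printing Implicit Defensive.
Import Order.TTheory GRing.Theory Num.Theory.
Import numFieldNormedType.Exports.
Local Open Scope classical_set_scope.
Local Open Scope ring_scope.
Local Open Scope complex_scope.

(* Every T in u_s(1,1) has the form [[0, c], [c^*, 0]].  Writing c = r u with
   r = |c| and |u| = 1, we get T = r U with U^2 = 1, hence
   exp T = cosh r + sinh r U = [[cosh r, u sinh r], [u^* sinh r, cosh r]].
   Conversely, a Hermitian M with M^* I_{1,1} M = I_{1,1} has real diagonal
   entries a, d with a^2 = d^2 = 1 + |M_01|^2, and Tr M >= 2 forces a = d >= 1,
   so M is of the same form with a = cosh r, r >= 0.  Conjugation by diag(1, u)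
   sends this matrix to M_r; as |M_01| is invariant under ~ and sinh is
   injective, r is unique. *)

Lemma ord2P (i : 'I_2) : i = 0 \/ i = 1.
Proof. by case: i => [[|[|//]] ?]; [left | right]; apply: val_inj. Qed.

Lemma mx2_eq (T : Type) (A B : 'M[T]_2) :
  A 0 0 = B 0 0 -> A 0 1 = B 0 1 -> A 1 0 = B 1 0 -> A 1 1 = B 1 1 -> A = B.
Proof.
move=> e00 e01 e10 e11; apply/matrixP => i j.
by case: (ord2P i) => ->; case: (ord2P j) => ->.
Qed.

Lemma big_ord2 (K : nmodType) (F : 'I_2 -> K) : \sum_(i < 2) F i = F 0 + F 1.
Proof. by rewrite !big_ord_recl big_ord0 addr0; congr (_ + F _); apply: val_inj. Qed.

Lemma mulmx2E (K : pzSemiRingType) (A B : 'M[K]_2) i j :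
  (A *m B) i j = A i 0 * B 0 j + A i 1 * B 1 j.
Proof. by rewrite mxE big_ord2. Qed.

Lemma mxtrace2 (K : pzSemiRingType) (A : 'M[K]_2) : \tr A = A 0 0 + A 1 1.
Proof. exact: big_ord2. Qed.

Lemma expr_involution (A : pzRingType) (u : A) k :
  u * u = 1 -> u ^+ k = if odd k then u else 1.
Proof.
move=> uu1; elim: k => [|k IHk]; first by rewrite expr0.
by rewrite exprSr IHk /=; case: (odd k); rewrite ?uu1 ?mul1r.
Qed.

Section Hyperbolic.
Variable R : realType.
Implicit Types t a n : R.

Lemma coshR_sqr t : coshR t ^+ 2 = 1 + sinhR t ^+ 2.
Proof.
rewrite /coshR /sinhR; have := expRxMexpNx_1 t.
move: (expR t) (expR (- t)) => e f ef1; nra.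
Qed.

Lemma coshR_ge1 t : 1 <= coshR t.
Proof.
rewrite /coshR; have := expRxMexpNx_1 t; have := expR_gt0 t.
move: (expR t) (expR (- t)) => e f e_gt0 ef1.
have : 0 <= (e - f) ^+ 2 by exact: sqr_ge0.
nra.
Qed.

Lemma sinhR_ge0 t : 0 <= t -> 0 <= sinhR t.
Proof.
move=> t_ge0; rewrite /sinhR.
have : expR (- t) <= expR t by rewrite ler_expR; lra.
lra.
Qed.

Lemma sinhR_inj : injective (@sinhR R).
Proof.
apply/inc_inj/le_mono => t1 t2 lt12; rewrite /sinhR.
have : expR t1 < expR t2 by rewrite ltr_expR.
have : expR (- t2) < expR (- t1) by rewrite ltr_expR ltrN2.
lra.
Qed.

Lemma coshR_sinhR_surj a n : 1 <= a -> 0 <= n -> a ^+ 2 = 1 + n ^+ 2 ->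
  exists2 t, 0 <= t & coshR t = a /\ sinhR t = n.
Proof.
move=> a_ge1 n_ge0 an.
have an_gt0 : 0 < a + n by lra.
have expRt : expR (ln (a + n)) = a + n by rewrite lnK.
have expRNt : expR (- ln (a + n)) = a - n.
  rewrite expRN expRt; apply: (@mulfI _ (a + n)); first by rewrite gt_eqF.
  by rewrite divff ?gt_eqF //; nra.
exists (ln (a + n)); first by apply: ln_ge0; lra.
by rewrite /coshR /sinhR expRt expRNt; split; field.
Qed.

End Hyperbolic.

Section Hermitian2.
Variable R : realType.
Local Notation C := R[i].
Local Notation normc := (@Normc.normc R).
Implicit Types (a d t : R) (c u : C) (M : 'M[C]_2).

Lemma normr_normc c : `|c| = (normc c)%:C.
Proof. by case: c. Qed.

Lemma normc_ge0 c : 0 <= normc c.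
Proof. by case: c => x y; exact: sqrtr_ge0. Qed.

Lemma normc_real a : normc a%:C = `|a|.
Proof. by rewrite /Normc.normc /= expr0n addr0 sqrtr_sqr. Qed.

Lemma normc_unimodular u : `|u| = 1 -> normc u = 1.
Proof. by rewrite normr_normc => /complexI. Qed.

Lemma mulcJ_normc c : c * c^* = (normc c ^+ 2)%:C.
Proof. by rewrite -sqr_normc normr_normc rmorphXn. Qed.

Lemma conjc_realM a c : (a%:C * c)^* = a%:C * c^*.
Proof. by case: c => x y; simpc. Qed.

Lemma conjc_fixed c : c^* = c -> c = (complex.Re c)%:C.
Proof.
case: c => x y /eqP; rewrite eq_complex /= => /andP[_ /eqP yN].
by apply/eqP; rewrite eq_complex /= eqxx /=; apply/eqP; lra.
Qed.

Lemma polar_decomposition c : exists2 u, `|u| = 1 & c = (normc c)%:C * u.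
Proof.
have [->|c0] := eqVneq c 0; first by exists 1; rewrite ?normr1 // Normc.normc0 mul0r.
exists (c / `|c|); first by rewrite normf_div normr_id divff ?normr_eq0.
by rewrite -normr_normc mulrC divfK ?normr_eq0.
Qed.

Definition herm2 a d c : 'M[C]_2 :=
  \matrix_(i, j) if i == j then (if i == 0 then a%:C else d%:C)
                 else if i == 0 then c else c^*.

Lemma mxstar_herm2 a d c : mxstar (herm2 a d c) = herm2 a d c.
Proof. by apply: mx2_eq; rewrite !mxE /= ?oppr0 ?conjcK. Qed.

Lemma herm2_inj a d c a' d' c' :
  herm2 a d c = herm2 a' d' c' -> [/\ a = a', d = d' & c = c'].
Proof.
move/matrixP => e; have := e 0 0; have := e 1 1; have := e 0 1.
by rewrite !mxE /= => -> /complexI -> /complexI ->.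
Qed.

Lemma hermitianP M : mxstar M = M -> exists a d c, M = herm2 a d c.
Proof.
move/matrixP => e.
have e00 : (M 0 0)^* = M 0 0 by have := e 0 0; rewrite mxE.
have e11 : (M 1 1)^* = M 1 1 by have := e 1 1; rewrite mxE.
have e10 : (M 0 1)^* = M 1 0 by have := e 1 0; rewrite mxE.
exists (complex.Re (M 0 0)), (complex.Re (M 1 1)), (M 0 1).
apply: mx2_eq; rewrite !mxE //=; exact: conjc_fixed.
Qed.

Lemma herm2_0 : herm2 0 0 0 = 0.
Proof. by apply: mx2_eq; rewrite !mxE /= ?oppr0 ?rmorphN1. Qed.

Lemma I11_herm2 : I11 R = herm2 1 (-1) 0.
Proof. by apply: mx2_eq; rewrite !mxE /= ?oppr0 ?rmorphN1. Qed.

Lemma herm2_I11_herm2 a d c :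
  herm2 a d c *m I11 R *m herm2 a d c =
  herm2 (a ^+ 2 - normc c ^+ 2) (normc c ^+ 2 - d ^+ 2) ((a - d)%:C * c).
Proof.
apply: mx2_eq; rewrite !(mulmx2E, mxE) /= ?conjc_realM.
all: rewrite ?rmorphB /= -?mulcJ_normc ?rmorphXn /=; ring.
Qed.

Lemma herm2_I11_add a d c :
  herm2 a d c *m I11 R + I11 R *m herm2 a d c = herm2 (2 * a) (- (2 * d)) 0.
Proof.
apply: mx2_eq; rewrite !(mulmx2E, mxE) conjc0 /=.
all: rewrite ?rmorphN ?rmorphM ?rmorph_nat; ring.
Qed.

Lemma us11_herm2 M : in_us11 M <-> exists c, M = herm2 0 0 c.
Proof.
split=> [[/esym/hermitianP [a [d [c ->]]]] | [c ->]].
  rewrite mxstar_herm2 herm2_I11_add -herm2_0 => /herm2_inj [a0 d0 _].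
  by exists c; congr herm2; lra.
by split; rewrite mxstar_herm2 // herm2_I11_add mulr0 oppr0 herm2_0.
Qed.

Lemma I11_sqr : I11 R *m I11 R = 1.
Proof. by apply: mx2_eq; rewrite !(mulmx2E, mxE) /=; ring. Qed.

Lemma unitmx_U11 M : mxstar M *m I11 R *m M = I11 R -> M \in unitmx.
Proof.
move=> MU; have : I11 R *m mxstar M *m I11 R *m M = 1%:M.
  by rewrite -!mulmxA (mulmxA (mxstar M)) MU I11_sqr.
by case/mulmx1_unit.
Qed.

Lemma Usplus_herm2 a d c :
  inUsplus (herm2 a d c) <-> [/\ a = d, 1 <= a & a ^+ 2 = 1 + normc c ^+ 2].
Proof.
rewrite /inUsplus /inUs11 mxstar_herm2 mxtrace2 !mxE /=.
rewrite -rmorphD -(rmorph_nat (real_complex R)) lecR.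
split=> [[[_ [_]]] | [<- a_ge1 an]].
  rewrite herm2_I11_herm2 I11_herm2 => /herm2_inj [a2 d2 _] ad2.
  have ad : a = d.
    have : (a - d) * (a + d) == 0 by apply/eqP; nra.
    by rewrite mulf_eq0 => /orP[/eqP|/eqP]; lra.
  by split=> //; lra.
have U11 : herm2 a a c *m I11 R *m herm2 a a c = I11 R.
  by rewrite herm2_I11_herm2 I11_herm2 subrr mul0r; congr herm2; lra.
split; last lra.
by split; [apply: unitmx_U11; rewrite mxstar_herm2 | split].
Qed.

Definition boost t u := herm2 (coshR t) (coshR t) ((sinhR t)%:C * u).

Lemma Mt_boost t : Mt t = boost t 1.
Proof. by apply: mx2_eq; rewrite !mxE mulr1 conjc_real. Qed.

Lemma Usplus_boost M :
  inUsplus M <-> exists t u, [/\ 0 <= t, `|u| = 1 & M = boost t u].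
Proof.
split=> [M_Us | [t [u [t_ge0 u1 ->]]]]; last first.
  apply/Usplus_herm2; split; [by [] | exact: coshR_ge1 |].
  rewrite Normc.normcM normc_real normc_unimodular // mulr1.
  by rewrite ger0_norm ?sinhR_ge0 // coshR_sqr.
have [a [d [c Mherm]]] : exists a d c, M = herm2 a d c.
  by apply: hermitianP; case: M_Us => [[_ [+ _]] _].
move: M_Us; rewrite Mherm => /Usplus_herm2 [<- a_ge1 an].
have [t t_ge0 [<- nE]] := coshR_sinhR_surj a_ge1 (normc_ge0 c) an.
have [u u1 cE] := polar_decomposition c.
by exists t, u; rewrite /boost nE -cE.
Qed.

End Hermitian2.

Section Exponential.
Variable R : realType.
Local Notation C := R[i].
Implicit Types (r t : R) (c u : C) (T U : 'M[C]_2).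

Lemma ReMr r c : complex.Re (r%:C * c) = r * complex.Re c.
Proof. by case: c => x y /=; rewrite mul0r subr0. Qed.

Lemma ImMr r c : complex.Im (r%:C * c) = r * complex.Im c.
Proof. by case: c => x y /=; rewrite mul0r addr0. Qed.

Lemma is_expm_combination T A B (f g : R^nat) (a b : R) :
    (forall N, expm_partial T N = (f N)%:C *: A + (g N)%:C *: B) ->
    f @ \oo --> a -> g @ \oo --> b ->
  is_expm T (a%:C *: A + b%:C *: B).
Proof.
move=> TE fa gb i j.
have entryE N : expm_partial T N i j = (f N)%:C * A i j + (g N)%:C * B i j.
  by rewrite TE !mxE.
rewrite !mxE !raddfD /= !ReMr !ImMr.
split; under eq_fun => N do rewrite entryE raddfD /= ?ReMr ?ImMr.
all: by apply: cvgD; apply: cvgM => //; exact: cvg_cst.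
Qed.

Lemma is_expm_unique T E1 E2 : is_expm T E1 -> is_expm T E2 -> E1 = E2.
Proof.
move=> TE1 TE2; apply/matrixP => i j.
have [Re1 Im1] := TE1 i j; have [Re2 Im2] := TE2 i j.
apply/eqP; rewrite eq_complex; apply/andP; split; apply/eqP.
  exact: cvg_unique Re1 Re2.
exact: cvg_unique Im1 Im2.
Qed.

Lemma expm_partial_involution U r N : U *m U = 1 ->
  expm_partial (r%:C *: U) N =
    ((series (exp_coeff r) N + series (exp_coeff (- r)) N) / 2)%:C *: 1 +
    ((series (exp_coeff r) N - series (exp_coeff (- r)) N) / 2)%:C *: U.
Proof.
move=> UU; rewrite /expm_partial /series /= !big_mkord.
rewrite -big_split -sumrB !mulr_suml !rmorph_sum !scaler_suml -big_split /=.
apply: eq_bigr => k _; rewrite exprZn (expr_involution _ UU) scalerA.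
rewrite /exp_coeff /= exprNn -signr_odd.
have kfE : (k`!%:R)^-1 * r%:C ^+ k = (r ^+ k / k`!%:R)%:C.
  by rewrite mulrC rmorphM rmorphXn fmorphV rmorph_nat.
have halfE (x : R) : (x + x) / 2 = x by field.
case: (odd k); rewrite ?expr1 ?expr0 ?mulN1r ?mul1r ?mulNr kfE.
  by rewrite addrN opprK mul0r rmorph0 scale0r add0r halfE.
by rewrite subrr mul0r rmorph0 scale0r addr0 halfE.
Qed.

Lemma is_expm_involution U r : U *m U = 1 ->
  is_expm (r%:C *: U) ((coshR r)%:C *: 1 + (sinhR r)%:C *: U).
Proof.
move=> UU; apply: is_expm_combination (fun N => expm_partial_involution r N UU) _ _.
all: apply: cvgM; [apply: cvgD || apply: cvgB | exact: cvg_cst].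
(* [expR x] is defined as the limit of [series (exp_coeff x)]. *)
all: try apply: cvgN; exact: is_cvg_series_exp_coeff.
Qed.

Lemma herm2_sqr u : `|u| = 1 -> herm2 0 0 u *m herm2 0 0 u = 1.
Proof.
move=> u1; have uJu : u * u^* = 1 by rewrite -sqr_normc u1 expr1n.
apply: mx2_eq; rewrite !(mulmx2E, mxE) /=.
all: by rewrite rmorph0 ?mul0r ?mulr0 ?add0r ?addr0 // mulrC.
Qed.

Lemma herm2_scale r c : herm2 0 0 (r%:C * c) = r%:C *: herm2 0 0 c.
Proof. by apply: mx2_eq; rewrite !mxE ?conjc_realM /= ?rmorph0 ?mulr0. Qed.

Lemma boost_combination t u :
  (coshR t)%:C *: 1 + (sinhR t)%:C *: herm2 0 0 u = boost t u.
Proof.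
by apply: mx2_eq; rewrite !mxE ?conjc_realM /= ?rmorph0 ?mulr0 ?mulr1 ?addr0 ?add0r.
Qed.

Lemma exp_us11_boost M :
  in_exp_us11 M <-> exists t u, [/\ 0 <= t, `|u| = 1 & M = boost t u].
Proof.
have expm_boost t u : `|u| = 1 -> is_expm (herm2 0 0 (t%:C * u)) (boost t u).
  move=> u1; rewrite herm2_scale -boost_combination.
  exact/is_expm_involution/herm2_sqr.
split=> [[T [/us11_herm2 [c ->] expT]] | [t [u [_ u1 ->]]]].
  have [u u1 cE] := polar_decomposition c.
  exists (Normc.normc c), u; split => //; first exact: normc_ge0.
  by apply: is_expm_unique expT _; rewrite {1}cE; exact: expm_boost.
exists (herm2 0 0 (t%:C * u)); split; last exact: expm_boost.
by apply/us11_herm2; exists (t%:C * u).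
Qed.

End Exponential.

Section Equivalence.
Variable R : realType.
Local Notation C := R[i].
Implicit Types (t : R) (u : C) (M N : 'M[C]_2).

Lemma sim0_norm01 M N : sim0 M N -> `|M 0 1| = `|N 0 1|.
Proof.
case=> [-> | [-> | [Q [[Qoff Qdiag] ->]]]] //; first by rewrite mxE normrN.
rewrite !mulmx2E !mxE (Qoff 0 1) // (Qoff 1 0) // conjc0.
by rewrite !mul0r !mulr0 addr0 add0r !normrM normcJ !Qdiag mul1r mulr1.
Qed.

Lemma sim_norm01 M N : sim M N -> `|M 0 1| = `|N 0 1|.
Proof. by elim=> [? ? /sim0_norm01 | | ? ? _ -> | ? ? ? _ -> _ ->]. Qed.

Definition diag2 u : 'M[C]_2 :=
  \matrix_(i, j) if i == j then (if i == 0 then 1 else u) else 0.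

Lemma diag2_U1U1 u : `|u| = 1 -> inU1U1 (diag2 u).
Proof.
move=> u1; split=> [i j | i]; last by case: (ord2P i) => ->; rewrite mxE ?normr1.
by case: (ord2P i) => ->; case: (ord2P j) => -> //; rewrite mxE.
Qed.

Lemma mxstar_diag2 u : mxstar (diag2 u) = diag2 u^*.
Proof. by apply: mx2_eq; rewrite !mxE /= ?oppr0. Qed.

Lemma herm2_conj_diag2 a d c u : `|u| = 1 ->
  mxstar (diag2 u) *m herm2 a d c *m diag2 u = herm2 a d (c * u).
Proof.
move=> u1; have uJu : u^* * u = 1 by rewrite mulrC -sqr_normc u1 expr1n.
apply: mx2_eq; rewrite mxstar_diag2 !(mulmx2E, mxE) /= ?rmorphM /=; try ring.
by rewrite mulr0 !mul0r !add0r mulrAC uJu mul1r.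
Qed.

Lemma boost_sim_Mt t u : `|u| = 1 -> sim (boost t u) (Mt t).
Proof.
move=> u1; apply: rst_step; right; right; exists (diag2 u).
by split; [exact: diag2_U1U1 | rewrite Mt_boost /boost herm2_conj_diag2 // mulr1].
Qed.

Lemma Mt_sim_inj t1 t2 : 0 <= t1 -> 0 <= t2 -> sim (Mt t1) (Mt t2) -> t1 = t2.
Proof.
move=> t1_ge0 t2_ge0 /sim_norm01; rewrite !mxE /=.
rewrite !ger0_norm ?ler0c ?sinhR_ge0 // => /complexI; exact: sinhR_inj.
Qed.

End Equivalence.

Theorem corollary4p2 (R : realType) :
  (forall M : 'M[R[i]]_2, in_exp_us11 M <-> inUsplus M) /\
  (forall t : R, 0 <= t -> in_exp_us11 (Mt t)) /\
  (forall M : 'M[R[i]]_2, in_exp_us11 M ->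
     (exists t : R, 0 <= t /\ sim M (Mt t)) /\
     (forall t1 t2 : R, 0 <= t1 -> 0 <= t2 ->
        sim M (Mt t1) -> sim M (Mt t2) -> Mt t1 = Mt t2)).
Proof.
split.
  by move=> M; split=> [/exp_us11_boost/Usplus_boost | /Usplus_boost/exp_us11_boost].
split.
  move=> t t_ge0; apply/exp_us11_boost; exists t, 1.
  by split; [| exact: normr1 | exact: Mt_boost].
move=> M /exp_us11_boost [t [u [t_ge0 u1 ->]]]; split.
  by exists t; split; last exact: boost_sim_Mt.
move=> t1 t2 t1_ge0 t2_ge0 s1 s2; congr Mt; apply: Mt_sim_inj => //.
by apply: (rst_trans _ _ _ (boost t u)); [apply: rst_sym |].
Qed.
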